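(* Let $\mathcal{C}$ be a deflation-exact category and let $\mathcal{A}$ be a non-empty full subcategory satisfying axiom (A3). Consider a commutative diagram $$\begin{array}{ccccc} X&\rightarrowtail&Y&\twoheadrightarrow&Z\\ \downarrow&&\downarrow&&\downarrow\\ X'&\rightarrowtail&Y'&\twoheadrightarrow&Z'\end{array}$$ whose rows are conflations and whose vertical arrows are deflations. If $X'\in\mathcal{A}$, then the diagram can be completed to a commutative $3\times 3$ diagram $$\begin{array}{ccccc} X''&\rightarrowtail&Y''&\twoheadrightarrow&Z''\\ \downarrow&&\downarrow&&\downarrow\\ X&\rightarrowtail&Y&\twoheadrightarrow&Z\\ \downarrow&&\downarrow&&\downarrow\\ X'&\rightarrowtail&Y'&\twoheadrightarrow&Z'\end{array}$$ in which all rows and all columns are conflations (the upper vertical maps being inflations). Moreover, the upper left square is a pullback and the lower right square is a pushout.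
   Context: A conflation category is an additive category with a class of kernel-cokernel pairs (closed under isomorphisms) called conflations; first map an inflation ($\rightarrowtail$), second a deflation ($\twoheadrightarrow$). A deflation-exact category is a conflation category satisfying: (R0) $1_0$ is a deflation; (R1) composites of deflations are deflations; (R2) pullbacks of deflations along arbitrary morphisms exist and are deflations. Axiom (A3): if $a\colon C\rightarrowtail D$ is an inflation and $b\colon C\twoheadrightarrow A$ is a deflation with $A\in\mathcal{A}$, the pushout of $a$ along $b$ exists and yields a deflation $D\twoheadrightarrow P$ and an inflation $A\rightarrowtail P$. *)

From HB Require Import structures.
From mathcomp Require Import all_boot all_algebra.
Set Implicit Arguments. Unset Strict Implicit. Unset Printing Implicit Defensive.
Import GRing.Theory.
Local Open Scope ring_scope.

Record preadditive := Preadditive {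
  obj :> Type;
  cHom : obj -> obj -> zmodType;
  comp : forall X Y Z : obj, cHom Y Z -> cHom X Y -> cHom X Z;
  idm : forall X : obj, cHom X X;
  compA : forall (X Y Z W : obj) (h : cHom Z W) (g : cHom Y Z) (f : cHom X Y),
    comp h (comp g f) = comp (comp h g) f;
  comp1m : forall (X Y : obj) (f : cHom X Y), comp (idm Y) f = f;
  compm1 : forall (X Y : obj) (f : cHom X Y), comp f (idm X) = f;
  compDl : forall (X Y Z : obj) (g1 g2 : cHom Y Z) (f : cHom X Y),
    comp (g1 + g2) f = comp g1 f + comp g2 f;
  compDr : forall (X Y Z : obj) (g : cHom Y Z) (f1 f2 : cHom X Y),
    comp g (f1 + f2) = comp g f1 + comp g f2
}.

Arguments cHom {p} _ _.
Arguments comp {p X Y Z} _ _.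
Arguments idm {p} X.

Notation "g '∘' f" := (comp g f) (at level 40, left associativity).

Section Defs.
Variable C : preadditive.

Definition is_zero_obj (O : C) : Prop :=
  forall X : C, (forall f g : cHom O X, f = g) /\ (forall f g : cHom X O, f = g).

Definition is_biproduct (A B P : C) (i1 : cHom A P) (i2 : cHom B P)
  (p1 : cHom P A) (p2 : cHom P B) : Prop :=
  [/\ p1 ∘ i1 = idm A, p2 ∘ i2 = idm B, p1 ∘ i2 = 0, p2 ∘ i1 = 0
    & i1 ∘ p1 + i2 ∘ p2 = idm P].

Definition additive : Prop :=
  (exists O : C, is_zero_obj O) /\
  (forall A B : C, exists (P : C) (i1 : cHom A P) (i2 : cHom B P)
     (p1 : cHom P A) (p2 : cHom P B), is_biproduct i1 i2 p1 p2).

Definition is_iso (X Y : C) (u : cHom X Y) : Prop :=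
  exists v : cHom Y X, v ∘ u = idm X /\ u ∘ v = idm Y.

Definition is_kernel (X Y Z : C) (f : cHom X Y) (g : cHom Y Z) : Prop :=
  g ∘ f = 0 /\
  forall (T : C) (h : cHom T Y), g ∘ h = 0 ->
    exists u : cHom T X, f ∘ u = h /\ forall u' : cHom T X, f ∘ u' = h -> u' = u.

Definition is_cokernel (X Y Z : C) (f : cHom X Y) (g : cHom Y Z) : Prop :=
  g ∘ f = 0 /\
  forall (T : C) (h : cHom Y T), h ∘ f = 0 ->
    exists u : cHom Z T, u ∘ g = h /\ forall u' : cHom Z T, u' ∘ g = h -> u' = u.

Definition kernel_cokernel_pair (X Y Z : C) (f : cHom X Y) (g : cHom Y Z) : Prop :=
  is_kernel f g /\ is_cokernel f g.

Definition conf_class := forall X Y Z : C, cHom X Y -> cHom Y Z -> Prop.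

Variable conf : conf_class.

Definition inflation (X Y : C) (f : cHom X Y) : Prop :=
  exists (Z : C) (g : cHom Y Z), conf f g.
Definition deflation (Y Z : C) (g : cHom Y Z) : Prop :=
  exists (X : C) (f : cHom X Y), conf f g.

Definition is_pullback (A B W P : C) (f : cHom A W) (g : cHom B W)
  (p1 : cHom P A) (p2 : cHom P B) : Prop :=
  f ∘ p1 = g ∘ p2 /\
  forall (T : C) (t1 : cHom T A) (t2 : cHom T B), f ∘ t1 = g ∘ t2 ->
    exists u : cHom T P, (p1 ∘ u = t1 /\ p2 ∘ u = t2) /\
      forall u' : cHom T P, p1 ∘ u' = t1 -> p2 ∘ u' = t2 -> u' = u.

Definition is_pushout (W A B P : C) (f : cHom W A) (g : cHom W B)
  (q1 : cHom A P) (q2 : cHom B P) : Prop :=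
  q1 ∘ f = q2 ∘ g /\
  forall (T : C) (t1 : cHom A T) (t2 : cHom B T), t1 ∘ f = t2 ∘ g ->
    exists u : cHom P T, (u ∘ q1 = t1 /\ u ∘ q2 = t2) /\
      forall u' : cHom P T, u' ∘ q1 = t1 -> u' ∘ q2 = t2 -> u' = u.

Definition conflation_category : Prop :=
  [/\ additive,
      (forall (X Y Z : C) (f : cHom X Y) (g : cHom Y Z),
          conf f g -> kernel_cokernel_pair f g)
    & (forall (X Y Z X' Y' Z' : C) (f : cHom X Y) (g : cHom Y Z)
          (f' : cHom X' Y') (g' : cHom Y' Z')
          (a : cHom X X') (b : cHom Y Y') (c : cHom Z Z'),
          conf f g -> is_iso a -> is_iso b -> is_iso c ->
          b ∘ f = f' ∘ a -> c ∘ g = g' ∘ b -> conf f' g')].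

Definition axiom_R0 : Prop :=
  forall O : C, is_zero_obj O -> deflation (idm O).

Definition axiom_R1 : Prop :=
  forall (X Y Z : C) (f : cHom X Y) (g : cHom Y Z),
    deflation f -> deflation g -> deflation (g ∘ f).

Definition axiom_R2 : Prop :=
  forall (Y Z Z' : C) (d : cHom Y Z) (t : cHom Z' Z), deflation d ->
    exists (P : C) (p : cHom P Y) (d' : cHom P Z'),
      is_pullback d t p d' /\ deflation d'.

Definition deflation_exact : Prop :=
  [/\ conflation_category, axiom_R0, axiom_R1 & axiom_R2].

Definition axiom_A3 (inA : C -> Prop) : Prop :=
  forall (Cc D A : C) (a : cHom Cc D) (b : cHom Cc A),
    inflation a -> deflation b -> inA A ->
    exists (P : C) (b' : cHom D P) (a' : cHom A P),
      is_pushout a b b' a' /\ deflation b' /\ inflation a'.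

End Defs.

(* Taking kernels of the vertical deflations gives the top row; the point is
   that Y'' -> Z'' is a deflation.  Let k : K -> Y be the kernel of the
   deflation gamma g.  The induced e : K -> Z'' makes K a pullback of g along
   gamma', so X -> K -> Z'' is a conflation, and alpha factors as a : K -> X'
   after X -> K.  By (A3) the pushout of X -> K along alpha is a deflation
   K -> P; because alpha extends along X -> K, P splits as X' (+) Z'' and this
   deflation is (a, e).  As Y'' is the kernel of a, Y'' -> Z'' is the pullback
   of (a, e) along the inclusion of Z'', hence a deflation, and its kernel is
   X'' because the upper left square is a pullback. *)

From mathcomp Require Import all_boot all_algebra.
Set Implicit Arguments. Unset Strict Implicit. Unset Printing Implicit Defensive.
Import GRing.Theory.
Local Open Scope ring_scope.

Section Preadditive.
Variable C : preadditive.

Lemma comp0m (X Y Z : C) (f : cHom X Y) : (0 : cHom Y Z) ∘ f = 0.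
Proof.
by apply: (addrI ((0 : cHom Y Z) ∘ f)); rewrite addr0 -compDl addr0.
Qed.

Lemma compm0 (X Y Z : C) (g : cHom Y Z) : g ∘ (0 : cHom X Y) = 0.
Proof.
by apply: (addrI (g ∘ (0 : cHom X Y))); rewrite addr0 -compDr addr0.
Qed.

Lemma compNl (X Y Z : C) (g : cHom Y Z) (f : cHom X Y) : (- g) ∘ f = - (g ∘ f).
Proof. by apply/eqP; rewrite -subr_eq0 opprK addrC -compDl subrr comp0m. Qed.

Lemma compNr (X Y Z : C) (g : cHom Y Z) (f : cHom X Y) : g ∘ (- f) = - (g ∘ f).
Proof. by apply/eqP; rewrite -subr_eq0 opprK addrC -compDr subrr compm0. Qed.

Definition monic (X Y : C) (f : cHom X Y) : Prop :=
  forall (T : C) (u v : cHom T X), f ∘ u = f ∘ v -> u = v.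

Definition epic (X Y : C) (f : cHom X Y) : Prop :=
  forall (T : C) (u v : cHom Y T), u ∘ f = v ∘ f -> u = v.

Lemma is_iso_idm (X : C) : is_iso (idm X).
Proof. by exists (idm X); rewrite comp1m. Qed.

Section KernelCokernel.
Variables (X Y Z : C) (f : cHom X Y) (g : cHom Y Z).

Lemma kernel_monic : is_kernel f g -> monic f.
Proof.
move=> [gf0 kerP] T u v fuv.
have gfu0 : g ∘ (f ∘ u) = 0 by rewrite compA gf0 comp0m.
have [w [_ w_uniq]] := kerP T _ gfu0.
by rewrite (w_uniq u) // (w_uniq v).
Qed.

Lemma cokernel_epic : is_cokernel f g -> epic g.
Proof.
move=> [gf0 cokerP] T u v ugv.
have ugf0 : (u ∘ g) ∘ f = 0 by rewrite -compA gf0 compm0.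
have [w [_ w_uniq]] := cokerP T _ ugf0.
by rewrite (w_uniq u) // (w_uniq v).
Qed.

Lemma kernel_factor (T : C) (h : cHom T Y) :
  is_kernel f g -> g ∘ h = 0 -> exists u : cHom T X, f ∘ u = h.
Proof. by move=> [_ kerP] /kerP [u [fu _]]; exists u. Qed.

Lemma cokernel_factor (T : C) (h : cHom Y T) :
  is_cokernel f g -> h ∘ f = 0 -> exists u : cHom Z T, u ∘ g = h.
Proof. by move=> [_ cokerP] /cokerP [u [ug _]]; exists u. Qed.

End KernelCokernel.

Lemma kernel_unique_iso (X X' Y Z : C) (f : cHom X Y) (f' : cHom X' Y)
    (g : cHom Y Z) :
  is_kernel f g -> is_kernel f' g -> exists u : cHom X' X, is_iso u /\ f ∘ u = f'.
Proof.
move=> fker f'ker.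
have [u fu] := kernel_factor fker f'ker.1.
have [v f'v] := kernel_factor f'ker fker.1.
exists u; split=> //; exists v; split.
- by apply: (kernel_monic f'ker); rewrite compA f'v fu compm1.
- by apply: (kernel_monic fker); rewrite compA fu f'v compm1.
Qed.

Section PullbackPushout.
Variables (A B W P : C).

Lemma pullback_eq (d : cHom A W) (t : cHom B W) (p1 : cHom P A) (p2 : cHom P B)
    (T : C) (u v : cHom T P) :
  is_pullback d t p1 p2 -> p1 ∘ u = p1 ∘ v -> p2 ∘ u = p2 ∘ v -> u = v.
Proof.
move=> [dt pbP] p1uv p2uv.
have sq : d ∘ (p1 ∘ v) = t ∘ (p2 ∘ v) by rewrite !compA dt.
have [w [_ w_uniq]] := pbP T _ _ sq.
by rewrite (w_uniq u) // (w_uniq v).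
Qed.

Lemma pushout_eq (d : cHom W A) (t : cHom W B) (q1 : cHom A P) (q2 : cHom B P)
    (T : C) (u v : cHom P T) :
  is_pushout d t q1 q2 -> u ∘ q1 = v ∘ q1 -> u ∘ q2 = v ∘ q2 -> u = v.
Proof.
move=> [dt poP] q1uv q2uv.
have sq : (v ∘ q1) ∘ d = (v ∘ q2) ∘ t by rewrite -!compA dt.
have [w [_ w_uniq]] := poP T _ _ sq.
by rewrite (w_uniq u) // (w_uniq v).
Qed.

End PullbackPushout.

Lemma pullback_unique_iso (A B W P P' : C) (d : cHom A W) (t : cHom B W)
    (p1 : cHom P A) (p2 : cHom P B) (p1' : cHom P' A) (p2' : cHom P' B) :
  is_pullback d t p1 p2 -> is_pullback d t p1' p2' ->
  exists u : cHom P' P, is_iso u /\ p2 ∘ u = p2'.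
Proof.
move=> pb pb'.
have [u [[p1u p2u] _]] := pb.2 P' _ _ pb'.1.
have [v [[p1v p2v] _]] := pb'.2 P _ _ pb.1.
exists u; split=> //; exists v; split.
- by apply: (pullback_eq pb'); rewrite compA ?p1v ?p2v ?p1u ?p2u compm1.
- by apply: (pullback_eq pb); rewrite compA ?p1u ?p2u ?p1v ?p2v compm1.
Qed.

Lemma monic_pullback (X Y K : C) (f : cHom X Y) (k : cHom K Y) (i : cHom X K) :
  monic k -> k ∘ i = f -> is_pullback f k (idm X) i.
Proof.
move=> k_mono ki; split; first by rewrite compm1.
move=> T t1 t2 ft1; exists t1; split; last by move=> u' <-; rewrite comp1m.
split; first by rewrite comp1m.
by apply: k_mono; rewrite compA ki.
Qed.

Lemma pullback_kernel (X X0 Y Y0 Z Z0 : C) (m : cHom X Y) (n : cHom Y Z)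
    (l : cHom X0 X) (u : cHom Y0 Y) (w : cHom Z0 Z)
    (m0 : cHom X0 Y0) (n0 : cHom Y0 Z0) :
  is_pullback m u l m0 -> is_kernel m n -> monic w -> n ∘ u = w ∘ n0 ->
  is_kernel m0 n0.
Proof.
move=> pb mker w_mono sq; split.
  by apply: w_mono; rewrite compm0 compA -sq -compA -pb.1 compA mker.1 comp0m.
move=> T h n0h.
have [x mx] : exists x, m ∘ x = u ∘ h.
  by apply: kernel_factor mker _; rewrite compA sq -compA n0h compm0.
have [v [[lv m0v] _]] := pb.2 T _ _ mx.
exists v; split=> // v' m0v'; apply: (pullback_eq pb); last by rewrite m0v m0v'.
apply: (kernel_monic mker).
by rewrite !compA pb.1 -!compA m0v m0v'.
Qed.

Lemma kernel_comp_pullback (K Y Z Z' Z'' : C) (g : cHom Y Z) (gamma : cHom Z Z')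
    (gamma' : cHom Z'' Z) (k : cHom K Y) (e : cHom K Z'') :
  is_kernel gamma' gamma -> is_kernel k (gamma ∘ g) -> g ∘ k = gamma' ∘ e ->
  is_pullback g gamma' k e.
Proof.
move=> gamma'ker kker gk; split=> // T t1 t2 gt1.
have [u ku] : exists u, k ∘ u = t1.
  by apply: kernel_factor kker _; rewrite -compA gt1 compA gamma'ker.1 comp0m.
exists u; split; last by move=> u' ku' _; apply: (kernel_monic kker); rewrite ku ku'.
split=> //; apply: (kernel_monic gamma'ker).
by rewrite compA -gk -compA ku.
Qed.

Lemma pushout_cokernel (X X' K P Z : C) (i : cHom X K) (alpha : cHom X X')
    (b : cHom K P) (a : cHom X' P) (e : cHom K Z) (s : cHom P Z) :
  is_pushout i alpha b a -> is_cokernel i e -> s ∘ b = e -> s ∘ a = 0 ->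
  is_cokernel a s.
Proof.
move=> po icoker sb sa; split=> // T h ha.
have [u ue] : exists u, u ∘ e = h ∘ b.
  by apply: cokernel_factor icoker _; rewrite -compA po.1 compA ha comp0m.
exists u; split.
  by apply: (pushout_eq po); rewrite -compA ?sb ?sa ?ue ?compm0 ?ha.
move=> u' u's; apply: (cokernel_epic icoker).
by rewrite ue -sb compA u's.
Qed.

Lemma split_cokernel_biproduct (A P Z : C) (a : cHom A P) (r : cHom P A)
    (s : cHom P Z) :
  r ∘ a = idm A -> is_cokernel a s -> exists sigma : cHom Z P, is_biproduct a sigma r s.
Proof.
move=> ra scoker.
pose h := idm P - a ∘ r.
have ha : h ∘ a = 0 by rewrite compDl compNl comp1m -compA ra compm1 subrr.
have [sigma sigma_s] := cokernel_factor scoker ha.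
have s_epi := cokernel_epic scoker.
exists sigma; split=> //.
- apply: s_epi; rewrite -compA sigma_s compDr compNr compm1 compA scoker.1.
  by rewrite comp0m subr0 comp1m.
- apply: s_epi; rewrite -compA sigma_s compDr compNr compm1 compA ra comp1m.
  by rewrite subrr comp0m.
- exact: scoker.1.
- by rewrite sigma_s addrC subrK.
Qed.

Lemma biproduct_inr_pullback (A B P K N : C) (i1 : cHom A P) (i2 : cHom B P)
    (p1 : cHom P A) (p2 : cHom P B) (h : cHom K P) (j : cHom N K) :
  is_biproduct i1 i2 p1 p2 -> is_kernel j (p1 ∘ h) ->
  is_pullback h i2 j (p2 ∘ h ∘ j).
Proof.
move=> [_ p2i2 p1i2 _ dec] jker; split.
  have p1hj : p1 ∘ (h ∘ j) = 0 by rewrite compA jker.1.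
  by rewrite -[h ∘ j]comp1m -dec compDl -!compA p1hj compm0 add0r.
move=> T t1 t2 ht1.
have [v jv] : exists v, j ∘ v = t1.
  by apply: kernel_factor jker _; rewrite -compA ht1 compA p1i2 comp0m.
exists v; split; last by move=> v' jv' _; apply: (kernel_monic jker); rewrite jv jv'.
by split=> //; rewrite -compA jv -compA ht1 compA p2i2 comp1m.
Qed.

Lemma kernel_square_pullback (X Y X' Y' X'' Y'' : C) (f : cHom X Y)
    (f' : cHom X' Y') (alpha : cHom X X') (beta : cHom Y Y')
    (alpha' : cHom X'' X) (beta' : cHom Y'' Y) (f'' : cHom X'' Y'') :
  is_kernel alpha' alpha -> is_kernel beta' beta -> monic f' ->
  beta ∘ f = f' ∘ alpha -> f ∘ alpha' = beta' ∘ f'' ->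
  is_pullback f beta' alpha' f''.
Proof.
move=> alpha'ker beta'ker f'_mono sq sq''; split=> // T t1 t2 ft1.
have alpha_t1 : alpha ∘ t1 = 0.
  by apply: f'_mono; rewrite compA -sq -compA ft1 compA beta'ker.1 comp0m compm0.
have [u alpha'u] := kernel_factor alpha'ker alpha_t1.
exists u; split.
  split=> //; apply: (kernel_monic beta'ker).
  by rewrite compA -sq'' -compA alpha'u.
by move=> u' alpha'u' _; apply: (kernel_monic alpha'ker); rewrite alpha'u alpha'u'.
Qed.

Lemma cokernel_square_pushout (X Y Z X' Y' Z' : C) (f : cHom X Y) (g : cHom Y Z)
    (f' : cHom X' Y') (g' : cHom Y' Z')
    (alpha : cHom X X') (beta : cHom Y Y') (gamma : cHom Z Z') :
  is_cokernel f g -> is_cokernel f' g' -> epic alpha ->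
  beta ∘ f = f' ∘ alpha -> gamma ∘ g = g' ∘ beta ->
  is_pushout g beta gamma g'.
Proof.
move=> gcoker g'coker alpha_epi sq1 sq2; split=> // T t1 t2 t1g.
have t2f' : t2 ∘ f' = 0.
  by apply: alpha_epi; rewrite -compA -sq1 compA -t1g -compA gcoker.1 compm0 comp0m.
have [u ug'] := cokernel_factor g'coker t2f'.
exists u; split.
  split=> //; apply: (cokernel_epic gcoker).
  by rewrite -compA sq2 compA ug'.
by move=> u' _ u'g'; apply: (cokernel_epic g'coker); rewrite ug' u'g'.
Qed.

End Preadditive.

Section Conflations.
Variables (C : preadditive) (conf : conf_class C).
Hypothesis conf_kernel_cokernel : forall (X Y Z : C) (f : cHom X Y) (g : cHom Y Z),
  conf f g -> kernel_cokernel_pair f g.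
Hypothesis conf_iso_closed : forall (X Y Z X' Y' Z' : C)
  (f : cHom X Y) (g : cHom Y Z) (f' : cHom X' Y') (g' : cHom Y' Z')
  (a : cHom X X') (b : cHom Y Y') (c : cHom Z Z'),
  conf f g -> is_iso a -> is_iso b -> is_iso c ->
  b ∘ f = f' ∘ a -> c ∘ g = g' ∘ b -> conf f' g'.

Lemma conf_kernel (X Y Z : C) (f : cHom X Y) (g : cHom Y Z) :
  conf f g -> is_kernel f g.
Proof. by move=> /conf_kernel_cokernel []. Qed.

Lemma conf_cokernel (X Y Z : C) (f : cHom X Y) (g : cHom Y Z) :
  conf f g -> is_cokernel f g.
Proof. by move=> /conf_kernel_cokernel []. Qed.

Lemma deflation_comp_iso (A B Z : C) (d : cHom B Z) (u : cHom A B) :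
  deflation conf d -> is_iso u -> deflation conf (d ∘ u).
Proof.
move=> [K [k kd]] [v [vu uv]]; exists K, (v ∘ k).
apply: (conf_iso_closed (a := idm K) (b := v) (c := idm Z) kd).
- exact: is_iso_idm.
- by exists u.
- exact: is_iso_idm.
- by rewrite compm1.
- by rewrite comp1m -compA uv compm1.
Qed.

Lemma conf_of_kernel (X Y Z : C) (f : cHom X Y) (g : cHom Y Z) :
  deflation conf g -> is_kernel f g -> conf f g.
Proof.
move=> [K [k kg]] fker.
have [u [uiso fu]] := kernel_unique_iso fker (conf_kernel kg).
apply: (conf_iso_closed (a := u) (b := idm Y) (c := idm Z) kg) => //.
- exact: is_iso_idm.
- exact: is_iso_idm.
- by rewrite comp1m.
- by rewrite comp1m compm1.
Qed.

Hypothesis pullback_deflation : axiom_R2 conf.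

Lemma deflation_pullback (A B W P : C) (d : cHom A W) (t : cHom B W)
    (p1 : cHom P A) (p2 : cHom P B) :
  deflation conf d -> is_pullback d t p1 p2 -> deflation conf p2.
Proof.
move=> dD pb; have [P0 [q1 [q2 [pb0 q2D]]]] := pullback_deflation t dD.
have [u [uiso q2u]] := pullback_unique_iso pb0 pb.
by rewrite -q2u; apply: deflation_comp_iso.
Qed.

Hypothesis comp_deflation : axiom_R1 conf.
Variable inA : C -> Prop.
Hypothesis pushout_along_deflation : axiom_A3 conf inA.

Lemma kernel_restriction_deflation (X K X' Z'' N : C) (i : cHom X K)
    (e : cHom K Z'') (a : cHom K X') (j : cHom N K) :
  conf i e -> deflation conf (a ∘ i) -> inA X' -> is_kernel j a ->
  deflation conf (e ∘ j).
Proof.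
move=> ie aiD inAX' jker.
have iI : inflation conf i by exists Z'', e.
have [P [b [a' [po [bD _]]]]] := pushout_along_deflation iI aiD inAX'.
have [r [[rb ra'] _]] := po.2 X' a (idm X') (esym (comp1m _)).
have ei : e ∘ i = 0 ∘ (a ∘ i) by rewrite comp0m (conf_kernel ie).1.
have [s [[sb sa'] _]] := po.2 Z'' e 0 ei.
have [sigma bip] := split_cokernel_biproduct ra'
  (pushout_cokernel po (conf_cokernel ie) sb sa').
rewrite -rb in jker; rewrite -sb.
exact: deflation_pullback bD (biproduct_inr_pullback bip jker).
Qed.

Lemma kernel_row_deflation (X Y Z X' Y' Z' Y'' Z'' : C)
    (f : cHom X Y) (g : cHom Y Z) (f' : cHom X' Y') (g' : cHom Y' Z')
    (alpha : cHom X X') (beta : cHom Y Y') (gamma : cHom Z Z')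
    (beta' : cHom Y'' Y) (gamma' : cHom Z'' Z) :
  conf f g -> conf f' g' -> deflation conf alpha ->
  conf beta' beta -> conf gamma' gamma ->
  beta ∘ f = f' ∘ alpha -> gamma ∘ g = g' ∘ beta -> inA X' ->
  exists g'' : cHom Y'' Z'', g ∘ beta' = gamma' ∘ g'' /\ deflation conf g''.
Proof.
move=> fg f'g' alphaD beta'beta gamma'gamma sq1 sq2 inAX'.
have gD : deflation conf g by exists X, f.
have gamma'ker := conf_kernel gamma'gamma.
have f'_mono := kernel_monic (conf_kernel f'g').
have [K [k kconf]] : deflation conf (gamma ∘ g).
  by apply: comp_deflation gD _; exists Z'', gamma'.
have kker := conf_kernel kconf; have k_mono := kernel_monic kker.
have [i ki] : exists i, k ∘ i = f.
  by apply: kernel_factor kker _; rewrite -compA (conf_kernel fg).1 compm0.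
have [e ke] : exists e, gamma' ∘ e = g ∘ k.
  by apply: kernel_factor gamma'ker _; rewrite compA kker.1.
have [a ka] : exists a, f' ∘ a = beta ∘ k.
  by apply: kernel_factor (conf_kernel f'g') _; rewrite compA -sq2 kker.1.
have [j kj] : exists j, k ∘ j = beta'.
  apply: kernel_factor kker _.
  by rewrite sq2 -compA (conf_kernel beta'beta).1 compm0.
have eD : deflation conf e.
  exact: deflation_pullback gD (kernel_comp_pullback gamma'ker kker (esym ke)).
have ie : conf i e.
  apply: conf_of_kernel eD (pullback_kernel (monic_pullback k_mono ki) _ _ _).
  - exact: conf_kernel fg.
  - exact: kernel_monic gamma'ker.
  - exact: esym ke.
have ai : a ∘ i = alpha.
  by apply: f'_mono; rewrite compA ka -compA ki sq1.
have jker : is_kernel j a.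
  apply: pullback_kernel (monic_pullback k_mono kj) _ f'_mono (esym ka).
  exact: conf_kernel beta'beta.
exists (e ∘ j); split; first by rewrite -kj !compA ke.
by apply: kernel_restriction_deflation ie _ inAX' jker; rewrite ai.
Qed.

End Conflations.

Theorem mainTheorem6 (C : preadditive) (conf : conf_class C)
  (inA : C -> Prop)
  (HC : deflation_exact conf)
  (HAne : exists A0 : C, inA A0)
  (HA3 : axiom_A3 conf inA)
  (X Y Z X' Y' Z' : C)
  (f : cHom X Y) (g : cHom Y Z) (f' : cHom X' Y') (g' : cHom Y' Z')
  (alpha : cHom X X') (beta : cHom Y Y') (gamma : cHom Z Z')
  (Hrow1 : conf _ _ _ f g) (Hrow2 : conf _ _ _ f' g')
  (Halpha : deflation conf alpha) (Hbeta : deflation conf beta)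
  (Hgamma : deflation conf gamma)
  (Hsq1 : beta ∘ f = f' ∘ alpha) (Hsq2 : gamma ∘ g = g' ∘ beta)
  (HX' : inA X') :
  exists (X'' Y'' Z'' : C) (f'' : cHom X'' Y'') (g'' : cHom Y'' Z'')
         (alpha' : cHom X'' X) (beta' : cHom Y'' Y) (gamma' : cHom Z'' Z),
    conf _ _ _ f'' g'' /\
    conf _ _ _ alpha' alpha /\ conf _ _ _ beta' beta /\ conf _ _ _ gamma' gamma /\
    f ∘ alpha' = beta' ∘ f'' /\ g ∘ beta' = gamma' ∘ g'' /\
    is_pullback f beta' alpha' f'' /\
    is_pushout g beta gamma g'.
Proof.
case: HC => [[_ kcp iso] _ R1 R2].
have [X'' [alpha' alpha'alpha]] := Halpha.
have [Y'' [beta' beta'beta]] := Hbeta.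
have [Z'' [gamma' gamma'gamma]] := Hgamma.
have [g'' [sq2'' g''D]] := kernel_row_deflation kcp iso R2 R1 HA3
  Hrow1 Hrow2 Halpha beta'beta gamma'gamma Hsq1 Hsq2 HX'.
have [f'' /esym sq1''] : exists f'', beta' ∘ f'' = f ∘ alpha'.
  apply: kernel_factor (conf_kernel kcp beta'beta) _.
  by rewrite compA Hsq1 -compA (conf_kernel kcp alpha'alpha).1 compm0.
have pb : is_pullback f beta' alpha' f'' := kernel_square_pullback
  (conf_kernel kcp alpha'alpha) (conf_kernel kcp beta'beta)
  (kernel_monic (conf_kernel kcp Hrow2)) Hsq1 sq1''.
have f''ker : is_kernel f'' g'' := pullback_kernel pb (conf_kernel kcp Hrow1)
  (kernel_monic (conf_kernel kcp gamma'gamma)) sq2''.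
have po : is_pushout g beta gamma g' := cokernel_square_pushout
  (conf_cokernel kcp Hrow1) (conf_cokernel kcp Hrow2)
  (cokernel_epic (conf_cokernel kcp alpha'alpha)) Hsq1 Hsq2.
exists X'', Y'', Z'', f'', g'', alpha', beta', gamma'.
by split; first exact: (conf_of_kernel kcp iso g''D f''ker).
Qed.
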